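(* Let $(N,\underline X)\in\aleph^{FGM*}$. For every $n\in A_N$ and $x\ge0$, $$F_{X\mid N=n}(x)=\frac{1}{\gamma_N(n)}\sum_{(i_0,i_1)\in\{0,1\}^2}f_{I_0,I_1}(i_0,i_1)\,\gamma_{N_{[1+i_0]}}(n)\,F_{X_{[1+i_1]}}(x),$$ where $f_{I_0,I_1}(i_0,i_1)=\tfrac14\big(1+(-1)^{i_0+i_1}\theta_{01}\big)$, or equivalently $$F_{X\mid N=n}(x)=F_X(x)+\frac{\theta_{01}}{4}\,\frac{\gamma_{N_{[2]}}(n)-\gamma_{N_{[1]}}(n)}{\gamma_N(n)}\big(F_{X_{[2]}}(x)-F_{X_{[1]}}(x)\big).$$ Here $F_{X\mid N=n}$ is the conditional cdf of $X_1$ given $N=n$ (which, by exchangeability, is that of any $X_j$).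
   Context: Collective risk model (CRM): $N$ is a random variable with values in $\mathbb{N}_0$, cdf $F_N$, pmf $\gamma_N(n)=\Pr(N=n)$ and support $A_N=\{n:\gamma_N(n)>0\}$; $\underline X=\{X_j\}_{j\ge1}$ is a sequence of identically distributed strictly positive random variables with common cdf $F_X$ (generic copy $X$). A $d$-variate FGM copula with parameters $\theta_{j_1\dots j_k}$ is $C(u_1,\dots,u_d)=\prod_{m=1}^d u_m\big(1+\sum_{k=2}^d\sum_{j_1<\dots<j_k}\theta_{j_1\dots j_k}\bar u_{j_1}\cdots\bar u_{j_k}\big)$, $\bar u=1-u$, with parameters such that $1+\sum_{k}\sum_{j_1<\dots<j_k}\theta_{j_1\dots j_k}\varepsilon_{j_1}\cdots\varepsilon_{j_k}\ge0$ for all $\varepsilon\in\{-1,1\}^d$. A CRM belongs to $\aleph^{FGM}$ if for every $k\in\mathbb{N}_1$, $k\le\sup A_N$, $F_{N,X_1,\dots,X_k}(n,x_1,\dots,x_k)=C_k(F_N(n),F_X(x_1),\dots,F_X(x_k))$ for a $(k+1)$-variate FGM copula $C_k$ with coordinates indexed $0,\dots,k$ (index $0$ for $N$). It belongs to $\aleph^{FGM*}$ if in addition $(N,X_1,\dots,X_k)\overset d=(N,X_{\pi(1)},\dots,X_{\pi(k)})$ for all such $k$ and all permutations $\pi$; then $\theta_{0j}=\theta_{01}$, $\theta_{ij}=\theta_{12}$, $\theta_{0ij}=\theta_{012}$ for all $1\le i<j$. For a random variable $Y$, $Y_{[1]}$, $Y_{[2]}$ denote the minimum and maximum of two iid copies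 of $Y$, with cdfs $F_{Y_{[j]}}$; $\gamma_{N_{[j]}}(n)=\Pr(N_{[j]}=n)$. *)

From HB Require Import structures.
From mathcomp Require Import all_boot all_order all_fingroup all_algebra.
From mathcomp Require Import all_classical all_reals all_analysis.
Set Implicit Arguments. Unset Strict Implicit. Unset Printing Implicit Defensive.
Import Order.TTheory GRing.Theory Num.Theory.
Local Open Scope classical_set_scope.
Local Open Scope ring_scope.

Section CRM.
Context {R : realType} {d : measure_display} {T : measurableType d}.

Definition pr (mu : set T -> \bar R) (A : set T) : R := fine (mu A).
Definition pr2 (mu : set (T * T) -> \bar R) (A : set (T * T)) : R := fine (mu A).

Variable P : probability T R.

Definition cdfN (N : T -> nat) (n : nat) : R := pr P [set t | (N t <= n)%N].
Definition pmfN (N : T -> nat) (n : nat) : R := pr P [set t | N t = n].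
Definition cdfR (Y : T -> R) (x : R) : R := pr P [set t | Y t <= x].

(* N_[1], N_[2]: min / max of two iid copies of N, realised on (T*T, P \x P) *)
Definition pmf_min (N : T -> nat) (n : nat) : R :=
  pr2 (P \x P)%E [set p | minn (N p.1) (N p.2) = n].
Definition pmf_max (N : T -> nat) (n : nat) : R :=
  pr2 (P \x P)%E [set p | maxn (N p.1) (N p.2) = n].
(* Y_[1], Y_[2]: min / max of two iid copies of Y *)
Definition cdf_min (Y : T -> R) (x : R) : R :=
  pr2 (P \x P)%E [set p | Num.min (Y p.1) (Y p.2) <= x].
Definition cdf_max (Y : T -> R) (x : R) : R :=
  pr2 (P \x P)%E [set p | Num.max (Y p.1) (Y p.2) <= x].

Definition cond_cdf (N : T -> nat) (Y : T -> R) (n : nat) (x : R) : R :=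
  pr P ([set t | Y t <= x] `&` [set t | N t = n]) / pmfN N n.

Definition le_supA (N : T -> nat) (k : nat) : Prop :=
  exists m : nat, 0 < pmfN N m /\ (k <= m)%N.

End CRM.

Definition FGM_copula {R : realType} (m : nat) (th : {set 'I_m} -> R)
    (u : 'I_m -> R) : R :=
  (\prod_(j < m) u j) *
  (1 + \sum_(S : {set 'I_m} | (2 <= #|S|)%N) th S * \prod_(j in S) (1 - u j)).

Definition FGM_admissible {R : realType} (m : nat) (th : {set 'I_m} -> R) : Prop :=
  forall eps : 'I_m -> bool,
    0 <= 1 + \sum_(S : {set 'I_m} | (2 <= #|S|)%N)
                th S * \prod_(j in S) (if eps j then 1 else -1).

(* The collective risk model: N nat-valued, X_j (j >= 1) identically
   distributed, strictly positive.  X 0 is unused. *)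
Definition CRM {R : realType} {d : measure_display} {T : measurableType d}
    (P : probability T R) (N : T -> nat) (X : nat -> T -> R) : Prop :=
  (forall n : nat, measurable [set t | N t = n]) /\
  (forall j : nat, measurable_fun setT (X j)) /\
  (forall j : nat, (0 < j)%N -> forall t, 0 < X j t) /\
  (forall j : nat, (0 < j)%N -> forall B : set R, measurable B ->
       P (X j @^-1` B) = P (X 1%N @^-1` B)).

(* (N, X) in aleph^FGM with copula parameters theta k for C_k (coordinates
   0..k, index 0 for N) *)
Definition in_FGM {R : realType} {d : measure_display} {T : measurableType d}
    (P : probability T R) (N : T -> nat) (X : nat -> T -> R)
    (theta : forall k : nat, {set 'I_k.+1} -> R) : Prop :=
  forall k : nat, (0 < k)%N -> le_supA P N k ->
    FGM_admissible (theta k) /\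
    forall (n : nat) (xs : 'I_k -> R),
      pr P ([set t | (N t <= n)%N] `&` [set t | forall i : 'I_k, X i.+1 t <= xs i])
      = FGM_copula (theta k)
          (fun i : 'I_k.+1 => if unlift ord0 i is Some j
                              then cdfR P (X 1%N) (xs j) else cdfN P N n).

Definition exchangeable {R : realType} {d : measure_display} {T : measurableType d}
    (P : probability T R) (N : T -> nat) (X : nat -> T -> R) : Prop :=
  forall k : nat, (0 < k)%N -> le_supA P N k ->
    forall (s : {perm 'I_k}) (A : set nat) (B : 'I_k -> set R),
      (forall i, measurable (B i)) ->
      P ([set t | A (N t)] `&` [set t | forall i : 'I_k, B i (X (s i).+1 t)])
      = P ([set t | A (N t)] `&` [set t | forall i : 'I_k, B i (X i.+1 t)]).

Definition in_FGMstar {R : realType} {d : measure_display} {T : measurableType d}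
    (P : probability T R) (N : T -> nat) (X : nat -> T -> R)
    (theta : forall k : nat, {set 'I_k.+1} -> R) : Prop :=
  CRM P N X /\ in_FGM P N X theta /\ exchangeable P N X.

Definition theta01 {R : realType} (theta : forall k : nat, {set 'I_k.+1} -> R) : R :=
  theta 1%N ([set ord0; ord_max] : {set 'I_2})%SET.

From HB Require Import structures.
From mathcomp Require Import all_boot all_order all_fingroup all_algebra.
From mathcomp Require Import all_classical all_reals all_analysis.
From mathcomp Require Import ring lra zify.
Import Order.TTheory GRing.Theory Num.Theory.
Local Open Scope classical_set_scope.
Local Open Scope ring_scope.

(** Only the bivariate copula C_1 of (N, X_1) matters.  With a := F_N(n),
   b := F_N(n-1) and u := F_X(x), the joint mass P(N = n, X_1 <= x) is the
   copula increment C_1(a, u) - C_1(b, u), while the laws of the minimum and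
   maximum of two iid copies are polynomials in a, b and u:
   P(N_[2] = n) = a^2 - b^2, P(N_[1] = n) = (1-b)^2 - (1-a)^2,
   F_X_[2] = u^2 and F_X_[1] = 1 - (1-u)^2.  Both formulas then follow by
   field arithmetic.  If N = 0 almost surely, C_1 is not specified, but then
   F_N = 1 and the joint cdf is C_1(1, u) = u whatever the parameter. *)

Section probability_facts.
Context {R : realType} {d : measure_display} {T : measurableType d}.
Variable P : probability T R.

Lemma pr_ge0 (A : set T) : 0 <= pr P A.
Proof. exact: fine_ge0. Qed.

Lemma pr_setT : pr P setT = 1.
Proof. by rewrite /pr probability_setT. Qed.

Lemma measure_eq0_of_pr (A : set T) : measurable A -> pr P A = 0 -> P A = 0%E.
Proof. by move=> mA PA0; rewrite -[LHS]fineK ?fin_num_measure // -/(pr P A) PA0. Qed.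

Lemma pr_setU (A B : set T) : measurable A -> measurable B ->
  A `&` B = set0 -> pr P (A `|` B) = pr P A + pr P B.
Proof. by move=> mA mB AB; rewrite /pr measureU // fineD // fin_num_measure. Qed.

Lemma pr_setC (A : set T) : measurable A -> pr P (~` A) = 1 - pr P A.
Proof. by move=> mA; rewrite /pr probability_setC // fineB // fin_num_measure. Qed.

Lemma pr_setI_of_full (A B : set T) : measurable A -> measurable B ->
  pr P B = 1 -> pr P (B `&` A) = pr P A.
Proof.
move=> mA mB PB1.
have nullC : P (~` B) = 0%E.
  by apply: measure_eq0_of_pr; [exact: measurableC | rewrite pr_setC // PB1 subrr].
have nullCA : pr P (~` B `&` A) = 0.
  rewrite /pr (@subset_measure0 _ _ _ P (~` B `&` A) (~` B)) //.
    exact: measurableI (measurableC mB) mA.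
  exact: measurableC.
rewrite -[in RHS](setTI A) -(setUv B) setIUl pr_setU ?nullCA ?addr0 //.
- exact: measurableI.
- exact: measurableI (measurableC mB) mA.
- by rewrite setIACA setICr set0I.
Qed.

Lemma pr2_setX (A B : set T) : measurable A -> measurable B ->
  pr2 (P \x P)%E (A `*` B) = pr P A * pr P B.
Proof. by move=> mA mB; rewrite /pr2 product_measure1E // fineM // fin_num_measure. Qed.

End probability_facts.

Lemma pr2_setXU {R : realType} {d : measure_display} {T : measurableType d}
    (P : probability T R) (A1 B1 A2 B2 : set T) :
  measurable A1 -> measurable B1 -> measurable A2 -> measurable B2 ->
  (A1 `*` B1) `&` (A2 `*` B2) = set0 ->
  pr2 (P \x P)%E ((A1 `*` B1) `|` (A2 `*` B2))
    = pr P A1 * pr P B1 + pr P A2 * pr P B2.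
Proof.
move=> mA1 mB1 mA2 mB2 disj.
by rewrite [LHS](pr_setU _ _ _ (measurableX mA1 mB1) (measurableX mA2 mB2) disj)
  -!pr2_setX.
Qed.

Section count_variable.
Context {R : realType} {d : measure_display} {T : measurableType d}.
Variables (P : probability T R) (N : T -> nat).
Hypothesis mN : forall n, measurable [set t | N t = n].

Lemma measurable_Nle m : measurable [set t | (N t <= m)%N].
Proof.
elim: m => [|m IH].
  by have -> : [set t | (N t <= 0)%N] = [set t | N t = 0%N]
    by apply/seteqP; split => t /=; lia.
have -> : [set t | (N t <= m.+1)%N] = [set t | (N t <= m)%N] `|` [set t | N t = m.+1]
  by apply/seteqP; split => t /=; lia.
exact: measurableU.
Qed.

Lemma measurable_Nlt m : measurable [set t | (N t < m)%N].
Proof.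
case: m => [|m]; last exact: measurable_Nle.
by have -> : [set t | (N t < 0)%N] = set0 by apply/seteqP; split => t /=; lia.
Qed.

Lemma cdfN_split n : cdfN P N n = pr P [set t | (N t < n)%N] + pmfN P N n.
Proof.
rewrite /cdfN /pmfN -pr_setU //; first congr pr.
- by apply/seteqP; split => t /=; lia.
- exact: measurable_Nlt.
- by apply/seteqP; split => t //= []; lia.
Qed.

Lemma pmf_max_cdfN n :
  pmf_max P N n = pmfN P N n * cdfN P N n + pr P [set t | (N t < n)%N] * pmfN P N n.
Proof.
rewrite /pmf_max -pr2_setXU //; try exact: measurable_Nle; try exact: measurable_Nlt.
- by congr pr2; apply/seteqP; split => t /=; lia.
- by apply/seteqP; split => t //= []; lia.
Qed.

Lemma pmf_min_cdfN n :
  pmf_min P N n = pmfN P N n * (1 - pr P [set t | (N t < n)%N])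
                  + (1 - cdfN P N n) * pmfN P N n.
Proof.
have mle := measurable_Nle n; have mlt := measurable_Nlt n.
rewrite /cdfN /pmfN -!pr_setC // /pmf_min -pr2_setXU //; try exact: measurableC.
- by congr pr2; apply/seteqP; split => t /=; lia.
- by apply/seteqP; split => t //= []; lia.
Qed.

Lemma pmfN_setI n (A : set T) : measurable A ->
  pr P (A `&` [set t | N t = n]) =
  pr P ([set t | (N t <= n)%N] `&` A) - pr P ([set t | (N t < n)%N] `&` A).
Proof.
move=> mA; apply/eqP; rewrite eq_sym subr_eq addrC -pr_setU.
- apply/eqP; congr pr; apply/seteqP; split => t /=.
    move=> [le At]; have [lt|eq] : (N t < n)%N \/ N t = n by lia.
    - by left.
    - by right.
  by case=> -[h h']; split => //; lia.
- exact: measurableI (measurable_Nlt n) mA.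
- exact: measurableI mA (mN n).
- by apply/seteqP; split => t //= [] []; lia.
Qed.

End count_variable.

Section real_variable.
Context {R : realType} {d : measure_display} {T : measurableType d}.
Variables (P : probability T R) (Y : T -> R).
Hypothesis mY : measurable_fun setT Y.

Lemma measurable_Yle x : measurable [set t | Y t <= x].
Proof.
have := mY measurableT _ (measurable_itv `]-oo, x]); rewrite setTI.
by congr measurable; apply/seteqP; split => t /=; rewrite in_itv.
Qed.

Lemma cdf_max_cdfR x : cdf_max P Y x = cdfR P Y x ^+ 2.
Proof.
rewrite /cdf_max /cdfR expr2 -pr2_setX; try exact: measurable_Yle.
by congr pr2; apply/seteqP; split => t /=; rewrite ge_max => /andP.
Qed.

Lemma cdf_min_cdfR x : cdf_min P Y x = 1 - (1 - cdfR P Y x) ^+ 2.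
Proof.
have mA := measurable_Yle x.
have -> : cdf_min P Y x = cdfR P Y x * 1 + (1 - cdfR P Y x) * cdfR P Y x.
  rewrite /cdfR -pr_setC // -(pr_setT P) /cdf_min -pr2_setXU //; try exact: measurableC.
  - congr pr2; apply/seteqP; split => t /=; rewrite ge_min.
      by case/orP => h; [left | case: (lerP (Y t.1) x) => h'; [left | right]].
    by case=> [[-> _]|[_ ->]]; rewrite ?orbT.
  - by apply/seteqP; split => t //= [[h _] []].
by ring.
Qed.

End real_variable.

Definition fgm2 {R : comRingType} (th a u : R) : R :=
  a * u * (1 + th * ((1 - a) * (1 - u))).

Lemma FGM_copula2 {R : realType} (th : {set 'I_2} -> R) (u : 'I_2 -> R) :
  FGM_copula th u = fgm2 (th [set: 'I_2]%SET) (u ord0) (u ord_max).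
Proof.
have card2 (S : {set 'I_2}) : (2 <= #|S|)%N = (S == [set: 'I_2]%SET).
  apply/idP/eqP => [h|->]; last by rewrite cardsT card_ord.
  apply/eqP; rewrite eqEcard cardsT card_ord h andbT.
  by apply/fintype.subsetP => i; rewrite inE.
rewrite /FGM_copula (big_pred1 [set: 'I_2]%SET) => [|S]; last by rewrite /= card2.
rewrite (eq_bigl predT) => [|j]; last by rewrite inE.
rewrite !big_ord_recr !big_ord0 /= !mul1r.
by have -> : widen_ord (leqnSn 1) ord_max = ord0 :> 'I_2 by apply: val_inj.
Qed.

Lemma theta01E {R : realType} (theta : forall k, {set 'I_k.+1} -> R) :
  theta01 theta = theta 1%N [set: 'I_2]%SET.
Proof.
by rewrite /theta01; congr theta; apply/setP => i; rewrite !inE; case: i => -[|[|]].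
Qed.

Section fgm_joint_cdf.
Context {R : realType} {d : measure_display} {T : measurableType d}.
Context {P : probability T R} {N : T -> nat} {X : nat -> T -> R}.
Context {theta : forall k : nat, {set 'I_k.+1} -> R}.
Hypotheses (mN : forall n, measurable [set t | N t = n])
  (mX1 : measurable_fun setT (X 1%N)) (fgmNX : in_FGM P N X theta).

Lemma cdfN_eq1_of_not_le_supA1 m : ~ le_supA P N 1 -> cdfN P N m = 1.
Proof.
move=> N0.
have pos_null : P [set t | (0 < N t)%N] = 0%E.
  have -> : [set t | (0 < N t)%N] = \bigcup_(i in setT) [set t | N t = i.+1].
    apply/seteqP; split => t /=; last by case=> i _ ->.
    by move=> Npos; exists (N t).-1; rewrite ?prednK.
  rewrite measure_bigcup //; last by move=> i j _ _ [t /= [-> []]].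
  rewrite eseries0 // => i _ _; apply: measure_eq0_of_pr => //.
  apply/eqP; rewrite eq_le pr_ge0 andbT leNgt; apply/negP => pos.
  by apply: N0; exists i.+1.
have : pr P (~` [set t | (N t <= m)%N]) = 0.
  rewrite /pr (@subset_measure0 _ _ _ P _ [set t | (0 < N t)%N]) //.
  - exact/measurableC/measurable_Nle.
  - have -> : [set t | (0 < N t)%N] = ~` [set t | (N t <= 0)%N]
      by apply/seteqP; split => t /=; lia.
    exact/measurableC/measurable_Nle.
  - by move=> t /= /negP; rewrite -ltnNge; exact: leq_ltn_trans (leq0n m).
by rewrite /cdfN pr_setC; [lra | exact: measurable_Nle].
Qed.

Lemma joint_cdf_fgm2 m x :
  pr P ([set t | (N t <= m)%N] `&` [set t | X 1%N t <= x])
    = fgm2 (theta01 theta) (cdfN P N m) (cdfR P (X 1%N) x).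
Proof.
have [supA|N0] := pselect (le_supA P N 1).
  have [_ joint] := fgmNX 1 isT supA.
  have -> : [set t | X 1%N t <= x] = [set t | forall i : 'I_1, X i.+1 t <= x].
    by apply/seteqP; split => t /= h => [i|]; [rewrite (ord1 i) | exact: (h ord0)].
  rewrite (joint m (fun=> x)) FGM_copula2 unlift_none theta01E.
  by case: (unliftP ord0 (ord_max : 'I_2)) => [j _|/(congr1 val)//].
rewrite pr_setI_of_full.
- rewrite cdfN_eq1_of_not_le_supA1 // /fgm2 /cdfR subrr.
  by rewrite !(mul0r, mulr0, addr0, mulr1, mul1r).
- exact: measurable_Yle.
- exact: measurable_Nle.
- exact: cdfN_eq1_of_not_le_supA1.
Qed.

Lemma joint_cdf_lt_fgm2 m x :
  pr P ([set t | (N t < m)%N] `&` [set t | X 1%N t <= x])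
    = fgm2 (theta01 theta) (pr P [set t | (N t < m)%N]) (cdfR P (X 1%N) x).
Proof.
case: m => [|m]; last exact: joint_cdf_fgm2.
have -> : [set t | (N t < 0)%N] = set0 by apply/seteqP; split => t /=; lia.
by rewrite set0I /pr measure0 /fgm2 !mul0r.
Qed.

End fgm_joint_cdf.

Theorem mainTheorem3 (R : realType) (d : measure_display) (T : measurableType d)
    (P : probability T R) (N : T -> nat) (X : nat -> T -> R)
    (theta : forall k : nat, {set 'I_k.+1} -> R) :
  in_FGMstar P N X theta ->
  forall (n : nat) (x : R), 0 < pmfN P N n -> 0 <= x ->
    cond_cdf P N (X 1%N) n x
      = (pmfN P N n)^-1 *
        (\sum_(i0 : bool) \sum_(i1 : bool)
           (1 / 4 * (1 + (-1) ^+ (i0 + i1)%N * theta01 theta)) *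
           (if i0 then pmf_max P N n else pmf_min P N n) *
           (if i1 then cdf_max P (X 1%N) x else cdf_min P (X 1%N) x))
    /\
    cond_cdf P N (X 1%N) n x
      = cdfR P (X 1%N) x
        + theta01 theta / 4
          * ((pmf_max P N n - pmf_min P N n) / pmfN P N n)
          * (cdf_max P (X 1%N) x - cdf_min P (X 1%N) x).
Proof.
move=> [[mN [mX _]] [fgmNX _]] n x pn_gt0 _.
have joint : pr P ([set t | X 1%N t <= x] `&` [set t | N t = n])
    = fgm2 (theta01 theta) (pr P [set t | (N t < n)%N] + pmfN P N n) (cdfR P (X 1%N) x)
      - fgm2 (theta01 theta) (pr P [set t | (N t < n)%N]) (cdfR P (X 1%N) x).
  rewrite pmfN_setI //; last exact: measurable_Yle.
  rewrite (joint_cdf_fgm2 mN (mX 1%N) fgmNX).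
  by rewrite (joint_cdf_lt_fgm2 mN (mX 1%N) fgmNX) cdfN_split.
rewrite /cond_cdf joint pmf_max_cdfN // pmf_min_cdfN // cdfN_split //.
rewrite cdf_max_cdfR // cdf_min_cdfR // !big_bool /fgm2 /=.
by split; field; rewrite gt_eqF.
Qed.
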